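(* Let $F \in \mathbb{C}^{n \times n}$ be a unitary matrix and let $y = F\hat{x} + e$, where $\hat{x} \in \mathbb{C}^{n}$ is $k$-sparse and $e \in \mathbb{C}^{n}$. If $\|e\|_2 \leq \eta$, then any solution $x^{\#}$ of the Basis Pursuit problem $\min_{z \in \mathbb{C}^n}\|z\|_1$ subject to $\|Fz - y\|_2 \leq \eta$ satisfies $$\| x^{\#}-\hat{x}\|_1 \leq 4\sqrt{k}\,\eta \quad\text{and}\quad \| x^{\#}-\hat{x}\|_2 \leq 6\eta .$$
   Context: A vector is $k$-sparse if it has at most $k$ nonzero entries. *)

(* Complex numbers are modelled by an arbitrary
   numClosedFieldType C (e.g. the complex numbers); this generalizes C^n. *)
From HB Require Import structures.
From mathcomp Require Import all_boot all_order all_algebra.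
Set Implicit Arguments. Unset Strict Implicit. Unset Printing Implicit Defensive.
Import Order.TTheory GRing.Theory Num.Theory.
Local Open Scope ring_scope.
Local Open Scope ring_scope.

Definition adjmx (C : numClosedFieldType) (m n : nat) (A : 'M[C]_(m, n)) : 'M[C]_(n, m) :=
  (map_mx Num.conj A)^T.

Definition unitary (C : numClosedFieldType) (n : nat) (F : 'M[C]_n) : Prop :=
  F *m adjmx F = 1%:M /\ adjmx F *m F = 1%:M.

Definition norm1 (C : numClosedFieldType) (n : nat) (x : 'cV[C]_n) : C :=
  \sum_(i < n) `|x i 0|.
Definition norm2 (C : numClosedFieldType) (n : nat) (x : 'cV[C]_n) : C :=
  sqrtC (\sum_(i < n) `|x i 0| ^+ 2).

Definition sparse (C : numClosedFieldType) (n k : nat) (x : 'cV[C]_n) : Prop :=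
  (#|[set i : 'I_n | x i ord0 != 0%R]| <= k)%N.

Definition BP_solution (C : numClosedFieldType) (n : nat) (F : 'M[C]_n)
    (y : 'cV[C]_n) (eta : C) (x : 'cV[C]_n) : Prop :=
  norm2 (F *m x - y) <= eta /\
  forall z : 'cV[C]_n, norm2 (F *m z - y) <= eta -> norm1 x <= norm1 z.

(* Write h = x# - xhat and let S be the support of xhat.  Both x# and xhat
   are feasible and F is an isometry, so ||h||_2 <= 2 eta.  Minimality of x#
   gives ||xhat + h||_1 <= ||xhat||_1, which forces the l1 mass of h off S to
   be at most its mass on S; hence ||h||_1 <= 2 ||h_S||_1 <= 2 sqrt k ||h||_2
   by Cauchy-Schwarz on the at most k coordinates of S. *)

From mathcomp Require Import all_boot all_order all_algebra.
From mathcomp Require Import ring.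
Set Implicit Arguments.
Unset Strict Implicit.
Unset Printing Implicit Defensive.
Import Order.TTheory GRing.Theory Num.Theory.
Local Open Scope ring_scope.

Section CauchySchwarz.
Variables (C : numClosedFieldType) (I : finType) (P : pred I) (u v : I -> C).

Lemma lagrange_identity :
  \sum_(i | P i) \sum_(j | P j) (u i * v j - u j * v i) ^+ 2 =
  ((\sum_(i | P i) u i ^+ 2) * (\sum_(i | P i) v i ^+ 2)
     - (\sum_(i | P i) u i * v i) ^+ 2) *+ 2.
Proof.
rewrite mulr2n {1}mulrC expr2 !big_distrlr /= -!sumrB -big_split /=.
apply: eq_bigr => i _; rewrite -!sumrB -big_split /=.
by apply: eq_bigr => j _; rewrite sqrrB !exprMn; ring.
Qed.

Lemma real_sum_mul_sqr_le :
  (forall i, u i \is Num.real) -> (forall i, v i \is Num.real) ->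
  (\sum_(i | P i) u i * v i) ^+ 2 <=
  (\sum_(i | P i) u i ^+ 2) * (\sum_(i | P i) v i ^+ 2).
Proof.
move=> u_real v_real; rewrite -subr_ge0 -(pmulrn_lge0 _ (isT : 0 < 2)%N).
rewrite -lagrange_identity; apply: sumr_ge0 => i _; apply: sumr_ge0 => j _.
by rewrite real_exprn_even_ge0 // rpredB // rpredM.
Qed.

Lemma sum_mul_le_sqrtC : (forall i, 0 <= u i) -> (forall i, 0 <= v i) ->
  \sum_(i | P i) u i * v i <=
  sqrtC (\sum_(i | P i) u i ^+ 2) * sqrtC (\sum_(i | P i) v i ^+ 2).
Proof.
move=> u_ge0 v_ge0.
have sum_uv_ge0 : 0 <= \sum_(i | P i) u i * v i.
  by apply: sumr_ge0 => i _; rewrite mulr_ge0.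
have sum_sqr_ge0 (w : I -> C) : (forall i, 0 <= w i) -> 0 <= \sum_(i | P i) w i ^+ 2.
  by move=> w_ge0; apply: sumr_ge0 => i _; rewrite exprn_ge0.
rewrite -sqrtCM ?nnegrE ?sum_sqr_ge0 // -[leLHS]sqrCK //.
rewrite ler_sqrtC ?nnegrE ?exprn_ge0 ?mulr_ge0 ?sum_sqr_ge0 //.
by apply: real_sum_mul_sqr_le => i; apply: ger0_real.
Qed.

End CauchySchwarz.

Section Norms.
Variable C : numClosedFieldType.

Lemma norm2_ge0 n (x : 'cV[C]_n) : 0 <= norm2 x.
Proof. by rewrite sqrtC_ge0 sumr_ge0 // => i _; rewrite exprn_ge0. Qed.

Lemma norm2_sqr n (x : 'cV[C]_n) : norm2 x ^+ 2 = \sum_(i < n) `|x i 0| ^+ 2.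
Proof. exact: sqrtCK. Qed.

Lemma norm2N n (x : 'cV[C]_n) : norm2 (- x) = norm2 x.
Proof. by congr sqrtC; apply: eq_bigr => i _; rewrite mxE normrN. Qed.

Lemma ler_norm2D n (x y : 'cV[C]_n) : norm2 (x + y) <= norm2 x + norm2 y.
Proof.
rewrite -(ler_pXn2r (isT : 0 < 2)%N) ?nnegrE ?addr_ge0 ?norm2_ge0 //.
rewrite sqrrD !norm2_sqr.
have cauchy_schwarz :=
  sum_mul_le_sqrtC predT (fun i => normr_ge0 (x i 0)) (fun i => normr_ge0 (y i 0)).
apply: le_trans (_ : \sum_(i < n) (`|x i 0| + `|y i 0|) ^+ 2 <= _).
  by apply: ler_sum => i _; rewrite mxE lerXn2r ?nnegrE ?addr_ge0 ?ler_normD.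
under eq_bigr do rewrite sqrrD.
by rewrite !big_split /= -mulr2n lerD2r lerD2l ler_wMn2r.
Qed.

Lemma adjmx_mul m n p (A : 'M[C]_(m, n)) (B : 'M[C]_(n, p)) :
  adjmx (A *m B) = adjmx B *m adjmx A.
Proof. by rewrite /adjmx map_mxM trmx_mul. Qed.

Lemma norm2E n (x : 'cV[C]_n) : norm2 x = sqrtC ((adjmx x *m x) 0 0).
Proof. by rewrite mxE; congr sqrtC; apply: eq_bigr => i _; rewrite !mxE normCKC. Qed.

Lemma norm2_isometry m n (F : 'M[C]_(m, n)) (x : 'cV[C]_n) :
  adjmx F *m F = 1%:M -> norm2 (F *m x) = norm2 x.
Proof.
by move=> FF1; rewrite !norm2E adjmx_mul -mulmxA (mulmxA (adjmx F)) FF1 mul1mx.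
Qed.

End Norms.

Section Sparsity.
Variables (C : numClosedFieldType) (n : nat).
Implicit Types x h : 'cV[C]_n.
Implicit Types S : {set 'I_n}.

Definition supp x : {set 'I_n} := [set i | x i 0 != 0].

Lemma norm1_split S x :
  norm1 x = \sum_(i in S) `|x i 0| + \sum_(i | i \notin S) `|x i 0|.
Proof. exact: bigID. Qed.

Lemma norm1_supp x : norm1 x = \sum_(i in supp x) `|x i 0|.
Proof.
rewrite (norm1_split (supp x)) [X in _ + X]big1 ?addr0 // => i.
by rewrite inE negbK => /eqP ->; rewrite normr0.
Qed.

Lemma sum_notin_supp_le x h : norm1 (x + h) <= norm1 x ->
  \sum_(i | i \notin supp x) `|h i 0| <= \sum_(i in supp x) `|h i 0|.
Proof.
move=> descent.
have : norm1 x - \sum_(i in supp x) `|h i 0| + \sum_(i | i \notin supp x) `|h i 0|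
         <= norm1 (x + h).
  rewrite {1}norm1_supp (norm1_split (supp x) (x + h)) -sumrB.
  apply: lerD; apply: ler_sum => i; rewrite mxE; first by rewrite lerB_normD.
  by rewrite inE negbK => /eqP ->; rewrite add0r.
by move/le_trans/(_ descent); rewrite -addrA gerDl addrC subr_le0.
Qed.

Lemma sum_le_sqrtC_card S x : \sum_(i in S) `|x i 0| <= sqrtC #|S|%:R * norm2 x.
Proof.
have := sum_mul_le_sqrtC (mem S) (fun i => normr_ge0 (x i 0)) (fun _ => ler01).
rewrite (eq_bigr _ (fun i _ => mulr1 _)) (eq_bigr _ (fun i _ => expr1n _ _)).
rewrite sumr_const mulrC => /le_trans; apply.
apply: ler_wpM2l; first by rewrite sqrtC_ge0 ler0n.
have sum_sqr_ge0 (P : pred 'I_n) : 0 <= \sum_(i | P i) `|x i 0| ^+ 2.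
  by apply: sumr_ge0 => i _; rewrite exprn_ge0.
rewrite ler_sqrtC ?nnegrE ?sum_sqr_ge0 //.
by rewrite [leRHS](bigID (mem S)) lerDl sum_sqr_ge0.
Qed.

Lemma descent_cone_norm1_le k x h : sparse k x -> norm1 (x + h) <= norm1 x ->
  norm1 h <= 2 * sqrtC k%:R * norm2 h.
Proof.
move=> x_sparse descent; rewrite (norm1_split (supp x)).
apply: le_trans (lerD (lexx _) (sum_notin_supp_le descent)) _.
rewrite -mulr2n -mulrA mulr_natl ler_wMn2r // (le_trans (sum_le_sqrtC_card _ _)) //.
by rewrite ler_wpM2r ?norm2_ge0 // ler_sqrtC ?nnegrE // ler_nat.
Qed.

End Sparsity.

Lemma norm2_sub_feasible_le (C : numClosedFieldType) m n (F : 'M[C]_(m, n))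
    (y : 'cV[C]_m) (eta : C) (x z : 'cV[C]_n) :
  adjmx F *m F = 1%:M -> norm2 (F *m x - y) <= eta -> norm2 (F *m z - y) <= eta ->
  norm2 (x - z) <= 2 * eta.
Proof.
move=> F_isometry x_feasible z_feasible.
rewrite -(norm2_isometry _ F_isometry).
have -> : F *m (x - z) = (F *m x - y) - (F *m z - y).
  by rewrite mulmxBr opprB addrA subrK.
by apply: le_trans (ler_norm2D _ _) _; rewrite norm2N mulr_natl mulr2n lerD.
Qed.

Theorem theorem3 (C : numClosedFieldType) (n k : nat) (F : 'M[C]_n)
    (xhat e : 'cV[C]_n) (eta : C) (xs : 'cV[C]_n) :
  unitary F -> sparse k xhat -> norm2 e <= eta ->
  BP_solution F (F *m xhat + e) eta xs ->
  norm1 (xs - xhat) <= 4 * sqrtC k%:R * eta /\ norm2 (xs - xhat) <= 6 * eta.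
Proof.
move=> [_ F_isometry] xhat_sparse e_le [xs_feasible xs_min].
have xhat_feasible : norm2 (F *m xhat - (F *m xhat + e)) <= eta.
  by rewrite opprD addrA subrr add0r norm2N.
have tube := norm2_sub_feasible_le F_isometry xs_feasible xhat_feasible.
have descent : norm1 (xhat + (xs - xhat)) <= norm1 xhat.
  by rewrite addrC subrK; exact: xs_min.
have eta_ge0 : 0 <= eta := le_trans (norm2_ge0 e) e_le.
split.
- apply: le_trans (descent_cone_norm1_le xhat_sparse descent) _.
  have -> : 4 * sqrtC k%:R * eta = 2 * sqrtC k%:R * (2 * eta) by ring.
  by rewrite ler_wpM2l // mulr_ge0 // sqrtC_ge0 ler0n.
- by apply: le_trans tube _; rewrite ler_wpM2r // ler_nat.
Qed.
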